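(* Assume $0<p<1$, $0<q<1$, $0<r<1$ and let $x_{w_1,w_2}$ ($w_1,w_2\ge0$, $w_1+w_2\ge1$) be the positive numbers defined in the context. (a) For every fixed $w_1\ge 0$, as $w_2\to\infty$, $$x_{w_1,w_2}\sim C(w_1)\,w_2^{-\left(1+\frac{\beta_1+1}{\alpha_2}\right)},\qquad C(w_1)=\frac{r}{\alpha_2}\,\frac{1}{w_1!}\,\frac{\Gamma\!\left(w_1+\frac{\beta_1}{\alpha_1}\right)}{\Gamma\!\left(\frac{\beta_1}{\alpha_1}\right)}\,\frac{\Gamma\!\left(1+\frac{\beta+1}{\alpha_2}\right)}{\Gamma\!\left(1+\frac{\beta_2}{\alpha_2}\right)}.$$ (b) Symmetrically, for every fixed $w_2\ge0$, as $w_1\to\infty$, $$x_{w_1,w_2}\sim C'(w_2)\,w_1^{-\left(1+\frac{\beta_2+1}{\alpha_1}\right)},\qquad C'(w_2)=\frac{1-r}{\alpha_1}\,\frac{1}{w_2!}\,\frac{\Gamma\!\left(w_2+\frac{\beta_2}{\alpha_2}\right)}{\Gamma\!\left(\frac{\beta_2}{\alpha_2}\right)}\,\frac{\Gamma\!\left(1+\frac{\beta+1}{\alpha_1}\right)}{\Gamma\!\left(1+\frac{\beta_1}{\alpha_1}\right)}.$$ Here $a_k\sim b_k$ means $a_k/b_k\to1$ and $\Gamma$ is the Gamma function.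
   Context: Fix an integer $N\ge 3$ and $0<p<1$, $0<q<1$, $0<r<1$. Parameters: $\alpha_1=pr+(1-p)q$, $\alpha_2=pr\frac{N-2}{N-1}+(1-p)q$, $\beta_1=\frac{(1-p)(1-q)}{p}$, $\beta_2=(N-1)\left[(1-r)+\frac{(1-p)(1-q)}{p}\right]$, $\beta=\beta_1+\beta_2$. The numbers $x_{w_1,w_2}$ (integers $w_1,w_2\ge0$, $w_1+w_2\ge1$) are defined by $x_{1,0}=\frac{1-r}{\alpha_1+\beta+1}$, $x_{0,1}=\frac{r}{\alpha_2+\beta+1}$, and for $w_1+w_2>1$ $x_{w_1,w_2}=\frac{(\alpha_1(w_1-1)+\beta_1)x_{w_1-1,w_2}+(\alpha_2(w_2-1)+\beta_2)x_{w_1,w_2-1}}{\alpha_1w_1+\alpha_2w_2+\beta+1}$, with the convention $x_{w_1,w_2}=0$ if $w_1<0$ or $w_2<0$. (In the paper $x_{w_1,w_2}$ is the almost sure limiting proportion of vertices with central weight $w_1$ and peripheral weight $w_2$ in a star-interaction random graph process.) *)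

From Stdlib Require Import Reals Lra ClassicalEpsilon Factorial.
Open Scope R_scope.

(** Euler's Gamma function, via the Gauss limit formula
    Gamma(x) = lim_{n->oo} n! n^x / (x (x+1) ... (x+n))   (valid for x > 0). *)
Fixpoint rising_prod (x : R) (n : nat) : R :=
  match n with
  | O => x
  | S m => rising_prod x m * (x + INR (S m))
  end.

Definition gauss_seq (x : R) (n : nat) : R :=
  INR (fact n) * Rpower (INR n) x / rising_prod x n.

Definition Gamma (x : R) : R :=
  epsilon (inhabits 0) (fun g => Un_cv (gauss_seq x) g).

Definition alpha1 (p q r : R) : R := p * r + (1 - p) * q.
Definition alpha2 (N : nat) (p q r : R) : R :=
  p * r * (INR N - 2) / (INR N - 1) + (1 - p) * q.
Definition beta1 (p q : R) : R := (1 - p) * (1 - q) / p.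
Definition beta2 (N : nat) (p q r : R) : R :=
  (INR N - 1) * ((1 - r) + (1 - p) * (1 - q) / p).
Definition beta (N : nat) (p q r : R) : R := beta1 p q + beta2 N p q r.

(** The numbers x_{w1,w2}; the value at (0,0) is an unused dummy 0. *)
Fixpoint xw (N : nat) (p q r : R) (w1 : nat) (w2 : nat) : R :=
  let a1 := alpha1 p q r in
  let a2 := alpha2 N p q r in
  let b1 := beta1 p q in
  let b2 := beta2 N p q r in
  let b := beta N p q r in
  match w1 with
  | O =>
    (fix col (w2 : nat) : R :=
       match w2 with
       | O => 0
       | S O => r / (a2 + b + 1)
       | S ((S _) as m) =>
           (a2 * INR m + b2) * col m / (a2 * INR (S m) + b + 1)
       end) w2
  | S w1' =>
    (fix col (w2 : nat) : R :=
       match w2 with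
       | O =>
           match w1' with
           | O => (1 - r) / (a1 + b + 1)
           | S _ => (a1 * INR w1' + b1) * xw N p q r w1' O
                      / (a1 * INR (S w1') + b + 1)
           end
       | S m =>
           ((a1 * INR w1' + b1) * xw N p q r w1' (S m)
            + (a2 * INR m + b2) * col m)
           / (a1 * INR (S w1') + a2 * INR (S m) + b + 1)
       end) w2
  end.

Definition Cconst (N : nat) (p q r : R) (w1 : nat) : R :=
  let a1 := alpha1 p q r in
  let a2 := alpha2 N p q r in
  r / a2 * (1 / INR (fact w1))
    * (Gamma (INR w1 + beta1 p q / a1) / Gamma (beta1 p q / a1))
    * (Gamma (1 + (beta N p q r + 1) / a2) / Gamma (1 + beta2 N p q r / a2)).

Definition Cconst' (N : nat) (p q r : R) (w2 : nat) : R :=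
  let a1 := alpha1 p q r in
  let a2 := alpha2 N p q r in
  (1 - r) / a1 * (1 / INR (fact w2))
    * (Gamma (INR w2 + beta2 N p q r / a2) / Gamma (beta2 N p q r / a2))
    * (Gamma (1 + (beta N p q r + 1) / a1) / Gamma (1 + beta1 p q / a1)).

(** The proof is an
    induction on [w1]:
    - for [w1 = 0] the recursion is one-dimensional and solves to a ratio of
      rising factorials, whose asymptotics follow from Gauss's product
      formula for [Gamma];
    - for [w1 = i+1] the scaled values [z_m = x_{i+1,m} m^e] satisfy an
      affine recurrence [z_{m+1} = rho_m z_m + h_m] with
      [m (1 - rho_m) -> lam > 0] and [m h_m -> mu] (the forcing term comes
      from column [i]); such a recurrence always converges to [mu / lam],
      and [mu / lam] is exactly [C(i+1)] thanks to [Gamma (x+1) = x Gamma x].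
    Part (a) is that result for [x]; part (b) is the same result applied to
    the transposed array, where the roles of the two weights are exchanged. *)

From Stdlib Require Import Reals Lra Lia ClassicalEpsilon Factorial.
From Coquelicot Require Import Coquelicot.
Open Scope R_scope.

Lemma exp_le_mono x y : x <= y -> exp x <= exp y.
Proof.
  intros [Hlt | ->]; [left; apply exp_increasing, Hlt | right; reflexivity].
Qed.

Lemma ln_le_sub1 y : 0 < y -> ln y <= y - 1.
Proof.
  intros Hy. pose proof (exp_ineq1_le (ln y)) as H. rewrite exp_ln in H; lra.
Qed.

Lemma exp_sub1_le u : exp u - 1 <= u * exp u.
Proof.
  pose proof (exp_ineq1_le (- u)) as H. rewrite exp_Ropp in H.
  pose proof (exp_pos u) as Hu.
  apply Rmult_le_compat_r with (r := exp u) in H; [|lra].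
  rewrite Rinv_l in H by lra. nra.
Qed.

Lemma INR_S_pos n : 0 < INR (S n).
Proof. apply lt_0_INR; lia. Qed.

Lemma fact_pos n : 0 < INR (fact n).
Proof. apply lt_0_INR, lt_O_fact. Qed.

Definition log_incr (n : nat) : R := ln (INR (S n)) - ln (INR n).

Lemma log_incr_bounds n : (1 <= n)%nat -> / INR (S n) <= log_incr n <= / INR n.
Proof.
  intros Hn. assert (H0 : 0 < INR n) by (apply lt_0_INR; lia).
  unfold log_incr. rewrite S_INR. split.
  - pose proof (ln_le_sub1 (INR n / (INR n + 1))) as H.
    rewrite ln_div in H by lra.
    assert (E : INR n / (INR n + 1) - 1 = - / (INR n + 1)) by (field; lra).
    assert (0 < INR n / (INR n + 1)) by (apply Rdiv_lt_0_compat; lra). lra.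
  - pose proof (ln_le_sub1 ((INR n + 1) / INR n)) as H.
    rewrite ln_div in H by lra.
    assert (E : (INR n + 1) / INR n - 1 = / INR n) by (field; lra).
    assert (0 < (INR n + 1) / INR n) by (apply Rdiv_lt_0_compat; lra). lra.
Qed.

Lemma lim_inv_INR : is_lim_seq (fun n => / INR n) 0.
Proof.
  replace (Finite 0) with (Rbar_inv p_infty) by reflexivity.
  apply is_lim_seq_inv; [apply is_lim_seq_INR | discriminate].
Qed.

Lemma lim_shifted_ratio k1 k2 : 0 < k2 ->
  is_lim_seq (fun m => (INR m + k1) / (INR m + k2)) 1.
Proof.
  intros Hk.
  assert (Hinv : is_lim_seq (fun m => / (INR m + k2)) 0).
  { apply is_lim_seq_le_le_loc with (u := fun _ => 0) (w := fun m => / INR m).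
    - exists 1%nat. intros n Hn. assert (0 < INR n) by (apply lt_0_INR; lia). split.
      + left; apply Rinv_0_lt_compat; lra.
      + apply Rinv_le_contravar; lra.
    - apply is_lim_seq_const.
    - apply lim_inv_INR. }
  apply is_lim_seq_ext with (u := fun m => 1 + (k1 - k2) * / (INR m + k2)).
  - intros m. pose proof (pos_INR m). field. lra.
  - replace (Finite 1) with (Finite (1 + (k1 - k2) * 0)) by (f_equal; ring).
    apply is_lim_seq_plus'; [apply is_lim_seq_const|].
    apply is_lim_seq_mult'; [apply is_lim_seq_const | exact Hinv].
Qed.

Lemma log_incr_lim : is_lim_seq log_incr 0.
Proof.
  apply is_lim_seq_le_le_loc with (u := fun _ => 0) (w := fun n => / INR n).
  - exists 1%nat. intros n Hn. pose proof (log_incr_bounds n Hn).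
    pose proof (Rinv_0_lt_compat _ (INR_S_pos n)). lra.
  - apply is_lim_seq_const.
  - apply lim_inv_INR.
Qed.

Lemma exp_log_incr_lim e : is_lim_seq (fun n => exp (e * log_incr n)) 1.
Proof.
  rewrite <- exp_0. apply is_lim_seq_continuous.
  - apply derivable_continuous_pt, derivable_pt_exp.
  - pose proof (is_lim_seq_scal_l log_incr e 0 log_incr_lim) as H.
    simpl in H. rewrite Rmult_0_r in H. exact H.
Qed.

Lemma first_order_log_incr e : 0 < e ->
  is_lim_seq (fun n => INR n * (exp (e * log_incr n) - 1)) e.
Proof.
  intros He.
  apply is_lim_seq_le_le_loc with (u := fun n => e * ((INR n + 0) / (INR n + 1)))
                                   (w := fun n => e * exp (e * log_incr n)).
  - exists 1%nat. intros n Hn. pose proof (log_incr_bounds n Hn) as [Hl Hu].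
    assert (H0 : 0 < INR n) by (apply lt_0_INR; lia).
    rewrite S_INR in Hl. set (d := log_incr n) in *. split.
    + (* [exp u >= 1 + u] with [u >= e / (n+1)] *)
      pose proof (exp_ineq1_le (e * d)).
      assert (e * / (INR n + 1) <= e * d) by (apply Rmult_le_compat_l; lra).
      assert (INR n * (e * / (INR n + 1)) <= INR n * (exp (e * d) - 1))
        by (apply Rmult_le_compat_l; lra).
      replace (e * ((INR n + 0) / (INR n + 1))) with (INR n * (e * / (INR n + 1)))
        by (field; lra). lra.
    + (* [exp u - 1 <= u exp u] with [n u <= e] *)
      pose proof (exp_sub1_le (e * d)). pose proof (exp_pos (e * d)).
      assert (Hnd : INR n * d <= 1).
      { apply Rmult_le_reg_r with (/ INR n); [apply Rinv_0_lt_compat; lra|].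
        replace (INR n * d * / INR n) with d by (field; lra). lra. }
      assert (INR n * (exp (e * d) - 1) <= INR n * (e * d * exp (e * d)))
        by (apply Rmult_le_compat_l; lra).
      assert (e * exp (e * d) * (INR n * d) <= e * exp (e * d) * 1)
        by (apply Rmult_le_compat_l; [apply Rmult_le_pos|]; lra).
      nra.
  - replace (Finite e) with (Rbar_mult e 1) by (simpl; f_equal; ring).
    apply is_lim_seq_scal_l, lim_shifted_ratio; lra.
  - replace (Finite e) with (Rbar_mult e 1) by (simpl; f_equal; ring).
    apply is_lim_seq_scal_l, exp_log_incr_lim.
Qed.

Lemma rising_prod_pos x n : 0 < x -> 0 < rising_prod x n.
Proof.
  intros Hx. induction n as [|n IH]; cbn [rising_prod]; [lra|].
  apply Rmult_lt_0_compat; [exact IH|]. pose proof (pos_INR (S n)). lra.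
Qed.

Lemma gauss_seq_pos x n : 0 < x -> 0 < gauss_seq x n.
Proof.
  intros Hx. unfold gauss_seq, Rpower. apply Rdiv_lt_0_compat.
  - apply Rmult_lt_0_compat; [apply fact_pos | apply exp_pos].
  - apply rising_prod_pos, Hx.
Qed.

Definition gauss_factor (x : R) (n : nat) : R :=
  INR (S n) * exp (x * log_incr n) / (x + INR (S n)).

Lemma gauss_seq_S x n : 0 < x ->
  gauss_seq x (S n) = gauss_seq x n * gauss_factor x n.
Proof.
  intros Hx. unfold gauss_seq, gauss_factor, Rpower, log_incr.
  change (rising_prod x (S n)) with (rising_prod x n * (x + INR (S n))).
  change (fact (S n)) with (S n * fact n)%nat. rewrite mult_INR.
  replace (x * ln (INR (S n)))
    with (x * ln (INR n) + x * (ln (INR (S n)) - ln (INR n))) by ring.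
  rewrite exp_plus.
  pose proof (rising_prod_pos x n Hx). pose proof (pos_INR (S n)).
  field. lra.
Qed.

Lemma gauss_factor_ge1 x n : 0 < x -> (1 <= n)%nat -> 1 <= gauss_factor x n.
Proof.
  intros Hx Hn. unfold gauss_factor.
  pose proof (log_incr_bounds n Hn) as [Hl _]. pose proof (INR_S_pos n) as HS.
  pose proof (exp_ineq1_le (x * log_incr n)).
  assert (x * / INR (S n) <= x * log_incr n) by (apply Rmult_le_compat_l; lra).
  apply Rmult_le_reg_r with (x + INR (S n)); [lra|].
  unfold Rdiv. rewrite Rmult_assoc, Rinv_l, Rmult_1_l, Rmult_1_r by lra.
  replace (x + INR (S n)) with (INR (S n) * (1 + x * / INR (S n))) by (field; lra).
  apply Rmult_le_compat_l; lra.
Qed.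

Lemma gauss_factor_le x n : 0 < x -> (1 <= n)%nat ->
  gauss_factor x n <= exp (x * (1 + x) * (/ INR n - / INR (S n))).
Proof.
  intros Hx Hn. unfold gauss_factor.
  pose proof (log_incr_bounds n Hn) as [_ Hu].
  assert (Hm : 0 < INR n) by (apply lt_0_INR; lia).
  rewrite S_INR. set (m := INR n) in *.
  set (y := x * (x - m) / (m * (m + 1))).
  assert (Hy : (m + 1) / (x + (m + 1)) <= 1 + y).
  { assert (E : 1 + y - (m + 1) / (x + (m + 1))
                = x * x * (x + 1) / (m * (m + 1) * (x + (m + 1))))
      by (unfold y; field; lra).
    assert (0 <= x * x * (x + 1) / (m * (m + 1) * (x + (m + 1)))).
    { apply Rmult_le_pos; [apply Rmult_le_pos; nra|].
      left. apply Rinv_0_lt_compat. apply Rmult_lt_0_compat; nra. }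
    lra. }
  replace (x * (1 + x) * (/ m - / (m + 1))) with (x / m + y) by (unfold y; field; lra).
  rewrite exp_plus.
  replace ((m + 1) * exp (x * log_incr n) / (x + (m + 1)))
    with (exp (x * log_incr n) * ((m + 1) / (x + (m + 1)))) by (field; lra).
  assert (Hfrac : 0 <= (m + 1) / (x + (m + 1))) by (left; apply Rdiv_lt_0_compat; lra).
  apply Rmult_le_compat; [left; apply exp_pos | exact Hfrac | |].
  - apply exp_le_mono. unfold Rdiv. apply Rmult_le_compat_l; lra.
  - pose proof (exp_ineq1_le y). lra.
Qed.

Lemma gauss_seq_bound x n : 0 < x ->
  gauss_seq x (S n) <= gauss_seq x 1 * exp (x * (1 + x) * (1 - / INR (S n))).
Proof.
  intros Hx. induction n as [|n IH].
  - replace (1 - / INR 1) with 0 by (simpl; field). rewrite Rmult_0_r, exp_0. lra.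
  - rewrite (gauss_seq_S x (S n) Hx).
    replace (x * (1 + x) * (1 - / INR (S (S n))))
      with (x * (1 + x) * (1 - / INR (S n))
            + x * (1 + x) * (/ INR (S n) - / INR (S (S n)))) by ring.
    rewrite exp_plus, <- Rmult_assoc.
    apply Rmult_le_compat; [left; apply gauss_seq_pos; exact Hx
                           | pose proof (gauss_factor_ge1 x (S n) Hx ltac:(lia)); lra
                           | exact IH | apply gauss_factor_le; [exact Hx | lia]].
Qed.

Lemma gauss_seq_cv x : 0 < x -> exists g, Un_cv (gauss_seq x) g /\ 0 < g.
Proof.
  intros Hx.
  set (u := fun n => gauss_seq x (S n)).
  assert (Hgrow : Un_growing u).
  { intros n. unfold u. rewrite (gauss_seq_S x (S n) Hx).
    pose proof (gauss_seq_pos x (S n) Hx).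
    pose proof (gauss_factor_ge1 x (S n) Hx ltac:(lia)). nra. }
  assert (Hub : has_ub u).
  { exists (gauss_seq x 1 * exp (x * (1 + x))). intros y [n ->].
    apply Rle_trans with (1 := gauss_seq_bound x n Hx).
    apply Rmult_le_compat_l; [left; apply gauss_seq_pos, Hx|].
    apply exp_le_mono.
    pose proof (Rinv_0_lt_compat _ (INR_S_pos n)).
    assert (0 < x * (1 + x)) by nra. nra. }
  destruct (growing_cv u Hgrow Hub) as [l Hl].
  exists l. split.
  - apply is_lim_seq_Reals, is_lim_seq_incr_1, is_lim_seq_Reals, Hl.
  - apply Rlt_le_trans with (u 0%nat); [apply gauss_seq_pos, Hx|].
    apply growing_ineq; assumption.
Qed.

Lemma Gamma_spec x : 0 < x -> Un_cv (gauss_seq x) (Gamma x) /\ 0 < Gamma x.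
Proof.
  intros Hx. destruct (gauss_seq_cv x Hx) as [g [Hg Hpos]].
  assert (H : Un_cv (gauss_seq x) (Gamma x)).
  { unfold Gamma. apply epsilon_spec. exists g; exact Hg. }
  split; [exact H|]. rewrite (UL_sequence _ _ _ H Hg). exact Hpos.
Qed.

Lemma Gamma_pos x : 0 < x -> 0 < Gamma x.
Proof. intros Hx. exact (proj2 (Gamma_spec x Hx)). Qed.

Lemma rising_prod_shift x n :
  rising_prod (x + 1) n * x = rising_prod x n * (x + 1 + INR n).
Proof.
  induction n as [|n IH]; cbn [rising_prod].
  - simpl. ring.
  - transitivity (rising_prod (x + 1) n * x * (x + 1 + INR (S n))); [ring|].
    rewrite IH, S_INR. ring.
Qed.

Lemma Gamma_succ x : 0 < x -> Gamma (x + 1) = x * Gamma x.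
Proof.
  intros Hx.
  assert (E : forall n, gauss_seq (x + 1) (S n)
             = gauss_seq x (S n) * (x * ((INR (S n) + 0) / (INR (S n) + (x + 1))))).
  { intros n. unfold gauss_seq, Rpower. pose proof (INR_S_pos n).
    replace ((x + 1) * ln (INR (S n))) with (x * ln (INR (S n)) + ln (INR (S n))) by ring.
    rewrite exp_plus, exp_ln by lra.
    pose proof (rising_prod_shift x (S n)) as Hs.
    pose proof (rising_prod_pos x (S n) Hx).
    pose proof (rising_prod_pos (x + 1) (S n) ltac:(lra)).
    replace (rising_prod (x + 1) (S n))
      with (rising_prod x (S n) * (x + 1 + INR (S n)) / x) by (rewrite <- Hs; field; lra).
    field. lra. }
  pose proof (proj1 (Gamma_spec x Hx)) as H1.
  pose proof (proj1 (Gamma_spec (x + 1) ltac:(lra))) as H2.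
  apply is_lim_seq_Reals, is_lim_seq_incr_1 in H1, H2.
  assert (H3 : is_lim_seq (fun n => gauss_seq (x + 1) (S n)) (Gamma x * (x * 1))).
  { apply is_lim_seq_ext with (1 := fun n => eq_sym (E n)).
    apply is_lim_seq_mult'; [exact H1|].
    apply is_lim_seq_mult'; [apply is_lim_seq_const|].
    apply (is_lim_seq_incr_1 (fun n => (INR n + 0) / (INR n + (x + 1)))).
    apply lim_shifted_ratio; lra. }
  apply is_lim_seq_unique in H2, H3. rewrite H2 in H3. injection H3 as ->. ring.
Qed.

Lemma lim_pow_neg lam : 0 < lam -> is_lim_seq (fun n => exp (- lam * ln (INR n))) 0.
Proof.
  intros Hl.
  assert (Hln : is_lim_seq (fun n => ln (INR n)) p_infty).
  { apply (filterlim_comp _ _ _ INR ln _ (Rbar_locally p_infty));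
      [apply is_lim_seq_INR | apply is_lim_ln_p]. }
  assert (Harg : is_lim_seq (fun n => - lam * ln (INR n)) m_infty).
  { replace m_infty with (Rbar_mult (- lam) p_infty).
    - apply is_lim_seq_scal_l, Hln.
    - simpl. case Rle_dec; [intros; exfalso; lra | reflexivity]. }
  exact (filterlim_comp _ _ _ _ exp _ (Rbar_locally m_infty) _ Harg is_lim_exp_m).
Qed.

Lemma decay_bound (g : nat -> R) lam M : 0 < lam -> (1 <= M)%nat ->
  (forall m, (M <= m)%nat -> 0 <= g m) ->
  (forall m, (M <= m)%nat -> g (S m) <= (1 - lam / INR m) * g m) ->
  forall m, (M <= m)%nat ->
  g m <= g M * exp (lam * ln (INR M)) * exp (- lam * ln (INR m)).
Proof.
  intros Hl HM Hpos Hrec m Hm. induction Hm as [|m Hm IH].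
  - rewrite Rmult_assoc, <- exp_plus.
    replace (lam * ln (INR M) + - lam * ln (INR M)) with 0 by ring.
    rewrite exp_0. lra.
  - assert (Hmp : 0 < INR m) by (apply lt_0_INR; lia).
    pose proof (log_incr_bounds m ltac:(lia)) as [_ Hd]. unfold log_incr in Hd.
    assert (Hstep : - (lam / INR m) + - lam * ln (INR m) <= - lam * ln (INR (S m))).
    { assert (lam * (ln (INR (S m)) - ln (INR m)) <= lam * / INR m)
        by (apply Rmult_le_compat_l; lra).
      unfold Rdiv. lra. }
    pose proof (exp_ineq1_le (- (lam / INR m))).
    pose proof (Hpos m Hm). pose proof (Hpos M (le_n M)).
    apply Rle_trans with (1 := Hrec m Hm).
    apply Rle_trans with (exp (- (lam / INR m)) * g m);
      [apply Rmult_le_compat_r; lra|].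
    apply Rle_trans
      with (exp (- (lam / INR m)) * (g M * exp (lam * ln (INR M)) * exp (- lam * ln (INR m))));
      [apply Rmult_le_compat_l; [left; apply exp_pos | exact IH]|].
    replace (exp (- (lam / INR m)) * (g M * exp (lam * ln (INR M)) * exp (- lam * ln (INR m))))
      with (g M * exp (lam * ln (INR M)) * exp (- (lam / INR m) + - lam * ln (INR m)))
      by (rewrite exp_plus; ring).
    apply Rmult_le_compat_l; [pose proof (exp_pos (lam * ln (INR M))); nra|].
    apply exp_le_mono, Hstep.
Qed.

Lemma decay_to_zero (g : nat -> R) lam : 0 < lam ->
  (forall m, 0 <= g m) ->
  eventually (fun m => g (S m) <= (1 - lam / INR m) * g m) ->
  is_lim_seq g 0.
Proof.
  intros Hl Hpos [N HN].
  set (C := g (S N) * exp (lam * ln (INR (S N)))).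
  apply is_lim_seq_le_le_loc
    with (u := fun _ => 0) (w := fun m => C * exp (- lam * ln (INR m))).
  - exists (S N). intros m Hm. split; [apply Hpos|].
    apply (decay_bound g lam (S N)); auto with arith.
  - apply is_lim_seq_const.
  - replace (Finite 0) with (Rbar_mult C 0) by (simpl; f_equal; ring).
    apply is_lim_seq_scal_l, lim_pow_neg, Hl.
Qed.

Lemma contraction_rate b k e : 0 < k -> 0 < e ->
  is_lim_seq (fun m => INR m * (1 - (INR m + b) / (INR m + k) * exp (e * log_incr m)))
             (k - b - e).
Proof.
  intros Hk He.
  apply is_lim_seq_ext with
    (u := fun m => (k - b) * ((INR m + 0) / (INR m + k))
                   - (INR m + b) / (INR m + k) * (INR m * (exp (e * log_incr m) - 1))).
  { intros m. pose proof (pos_INR m). field. lra. }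
  replace (Finite (k - b - e)) with (Finite ((k - b) * 1 - 1 * e)) by (f_equal; ring).
  apply is_lim_seq_minus'.
  - apply is_lim_seq_mult'; [apply is_lim_seq_const | apply lim_shifted_ratio, Hk].
  - apply is_lim_seq_mult'; [apply lim_shifted_ratio, Hk | apply first_order_log_incr, He].
Qed.

Lemma excess_contracts c L zm zm1 h eps :
  0 <= c <= 1 ->
  zm1 - L = (1 - c) * (zm - L) + (h - c * L) ->
  Rabs (h - c * L) <= eps / 2 * c ->
  Rmax (Rabs (zm1 - L) - eps / 2) 0 <= (1 - c) * Rmax (Rabs (zm - L) - eps / 2) 0.
Proof.
  intros Hc Hz Hh.
  assert (Hd : Rabs (zm1 - L) <= (1 - c) * Rabs (zm - L) + eps / 2 * c).
  { rewrite Hz. eapply Rle_trans; [apply Rabs_triang|].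
    rewrite Rabs_mult, (Rabs_pos_eq (1 - c)) by lra. lra. }
  pose proof (Rmax_l (Rabs (zm - L) - eps / 2) 0).
  pose proof (Rmax_r (Rabs (zm - L) - eps / 2) 0).
  apply Rmax_lub; [|apply Rmult_le_pos; lra].
  assert ((1 - c) * (Rabs (zm - L) - eps / 2)
          <= (1 - c) * Rmax (Rabs (zm - L) - eps / 2) 0)
    by (apply Rmult_le_compat_l; lra).
  lra.
Qed.

Lemma defect_bound m c h L lam eps del : 0 < m -> 0 < lam -> 0 <= del ->
  del * (1 + Rabs L) = eps * lam / 4 ->
  Rabs (m * c - lam) <= del -> Rabs (m * h - L * lam) <= del ->
  lam / 2 <= m * c ->
  Rabs (h - c * L) <= eps / 2 * c.
Proof.
  intros Hm Hl Hdel Hdef Hc Hh Hmc.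
  assert (Hscaled : Rabs (m * (h - c * L)) <= eps * lam / 4).
  { replace (m * (h - c * L)) with ((m * h - L * lam) - L * (m * c - lam)) by ring.
    eapply Rle_trans; [apply Rabs_triang|]. rewrite Rabs_Ropp, Rabs_mult.
    assert (Rabs L * Rabs (m * c - lam) <= Rabs L * del)
      by (apply Rmult_le_compat_l; [apply Rabs_pos | exact Hc]).
    lra. }
  rewrite Rabs_mult, (Rabs_pos_eq m) in Hscaled by lra.
  apply Rmult_le_reg_l with m; [exact Hm|].
  assert (0 <= eps) by (pose proof (Rabs_pos L); nra).
  assert (eps / 2 * (lam / 2) <= eps / 2 * (m * c)) by (apply Rmult_le_compat_l; lra).
  nra.
Qed.

Lemma affine_recurrence_limit (z rho h : nat -> R) (lam mu : R) : 0 < lam ->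
  (forall m, z (S m) = rho m * z m + h m) ->
  is_lim_seq (fun m => INR m * (1 - rho m)) lam ->
  is_lim_seq (fun m => INR m * h m) mu ->
  is_lim_seq z (mu / lam).
Proof.
  intros Hl Hrec Hc Hh.
  set (L := mu / lam).
  apply is_lim_seq_spec. intros [eps Heps]. simpl.
  set (del := eps * lam / (4 * (1 + Rabs L))).
  assert (Hdel : 0 < del) by (unfold del; pose proof (Rabs_pos L);
                              apply Rdiv_lt_0_compat; nra).
  assert (Hdef : del * (1 + Rabs L) = eps * lam / 4)
    by (unfold del; pose proof (Rabs_pos L); field; lra).
  apply is_lim_seq_spec in Hc, Hh.
  (* The excess [g_m] of [|z_m - L|] over [eps/2] eventually contracts by
     the factor [1 - lam/(2m)], hence tends to 0. *)
  set (g := fun m => Rmax (Rabs (z m - L) - eps / 2) 0).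
  assert (Hg : is_lim_seq g 0).
  { assert (Hl2 : 0 < lam / 2) by lra.
    apply (decay_to_zero g (lam / 2)); [exact Hl2 | intros; apply Rmax_r|].
    pose proof (Hc (mkposreal _ (Rmin_pos _ _ Hdel Hl2))) as Ec.
    pose proof (Hh (mkposreal _ Hdel)) as Eh.
    pose proof (proj2 (is_lim_seq_spec _ _) is_lim_seq_INR (2 * lam)) as Ebig.
    generalize (filter_and _ _ Ec (filter_and _ _ Eh Ebig)).
    apply filter_imp. simpl. intros m [Hcm [Hhm Hbig]].
    pose proof (Rmin_l del (lam / 2)). pose proof (Rmin_r del (lam / 2)).
    assert (Hmp : 0 < INR m) by lra.
    set (c := 1 - rho m) in *.
    assert (Hmc : lam / 2 <= INR m * c <= 3 * lam / 2)
      by (apply Rabs_def2 in Hcm; lra).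
    assert (Hc_lo : lam / 2 / INR m <= c)
      by (apply Rmult_le_reg_l with (INR m); [lra|]; field_simplify; lra).
    assert (Hc_hi : c <= 1)
      by (apply Rmult_le_reg_l with (INR m); [lra|]; nra).
    assert (0 < lam / 2 / INR m) by (apply Rdiv_lt_0_compat; lra).
    apply Rle_trans with ((1 - c) * g m).
    - apply excess_contracts with (h := h m); [lra | rewrite Hrec; unfold c; ring|].
      apply (defect_bound (INR m) c (h m) L lam eps del); try lra.
      unfold L. replace (mu / lam * lam) with mu by (field; lra). lra.
    - apply Rmult_le_compat_r; [apply Rmax_r | lra]. }
  apply is_lim_seq_spec in Hg.
  destruct (Hg (mkposreal (eps / 2) ltac:(lra))) as [N HN].
  exists N. intros n Hn. specialize (HN n Hn). simpl in HN. unfold g in HN.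
  pose proof (Rmax_l (Rabs (z n - L) - eps / 2) 0).
  rewrite Rminus_0_r, Rabs_pos_eq in HN by apply Rmax_r. lra.
Qed.

Lemma equiv_of_scaled_limit (u : nat -> R) (C e : R) : C <> 0 ->
  is_lim_seq (fun w => u w * exp (e * ln (INR w))) C ->
  Un_cv (fun w => u w / (C * Rpower (INR w) (- e))) 1.
Proof.
  intros HC H. apply is_lim_seq_Reals.
  apply is_lim_seq_ext with (u := fun w => u w * exp (e * ln (INR w)) / C).
  - intros w. unfold Rpower. replace (- e * ln (INR w)) with (- (e * ln (INR w))) by ring.
    rewrite exp_Ropp. pose proof (exp_pos (e * ln (INR w))). field. lra.
  - replace (Finite 1) with (Finite (C / C)) by (f_equal; field; exact HC).
    apply is_lim_seq_div'; [exact H | apply is_lim_seq_const | exact HC].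
Qed.

(** The recursion defining [x_{w1,w2}], with abstract coefficients so that
    the same argument covers both parts of the theorem (part (b) is part (a)
    for the transposed array). *)
Section ColumnAsymptotics.

Variables (a1 a2 b1 b2 B s : R) (X : nat -> nat -> R).
Hypotheses (Ha1 : 0 < a1) (Ha2 : 0 < a2) (Hb1 : 0 < b1) (Hb2 : 0 < b2)
           (HB : B = b1 + b2).
Hypothesis X_0_1 : X 0%nat 1%nat = s / (a2 + B + 1).
Hypothesis X_0_S : forall m,
  X 0%nat (S (S m)) = (a2 * INR (S m) + b2) * X 0%nat (S m) / (a2 * INR (S (S m)) + B + 1).
Hypothesis X_S_S : forall i m,
  X (S i) (S m) = ((a1 * INR i + b1) * X i (S m) + (a2 * INR m + b2) * X (S i) m)
                  / (a1 * INR (S i) + a2 * INR (S m) + B + 1).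

Definition tail_const (w1 : nat) : R :=
  s / a2 * (1 / INR (fact w1))
    * (Gamma (INR w1 + b1 / a1) / Gamma (b1 / a1))
    * (Gamma (1 + (B + 1) / a2) / Gamma (1 + b2 / a2)).

Lemma tail_const_pos w1 : 0 < s -> 0 < tail_const w1.
Proof.
  intros Hs. unfold tail_const.
  assert (0 < b1 / a1) by (apply Rdiv_lt_0_compat; lra).
  assert (0 < b2 / a2) by (apply Rdiv_lt_0_compat; lra).
  assert (0 < (B + 1) / a2) by (apply Rdiv_lt_0_compat; lra).
  pose proof (pos_INR w1). pose proof (fact_pos w1).
  pose proof (Gamma_pos (INR w1 + b1 / a1) ltac:(lra)).
  pose proof (Gamma_pos (b1 / a1) ltac:(lra)).
  pose proof (Gamma_pos (1 + (B + 1) / a2) ltac:(lra)).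
  pose proof (Gamma_pos (1 + b2 / a2) ltac:(lra)).
  apply Rmult_lt_0_compat; [apply Rmult_lt_0_compat; [apply Rmult_lt_0_compat|]|];
    apply Rdiv_lt_0_compat; lra.
Qed.

(** [C(i+1) = C(i) (a1 i + b1) / (a1 (i+1))], by [Gamma (x+1) = x Gamma x]. *)
Lemma tail_const_S i :
  tail_const (S i) = tail_const i * (a1 * INR i + b1) / (a1 * INR (S i)).
Proof.
  unfold tail_const.
  assert (Hc : 0 < b1 / a1) by (apply Rdiv_lt_0_compat; lra).
  assert (0 < b2 / a2) by (apply Rdiv_lt_0_compat; lra).
  pose proof (pos_INR i). pose proof (fact_pos i).
  pose proof (Gamma_pos (1 + b2 / a2) ltac:(lra)).
  pose proof (Gamma_pos (b1 / a1) Hc).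
  replace (INR (S i) + b1 / a1) with ((INR i + b1 / a1) + 1) by (rewrite S_INR; ring).
  rewrite Gamma_succ by lra.
  change (fact (S i)) with (S i * fact i)%nat. rewrite mult_INR, S_INR.
  field. repeat split; lra.
Qed.

Definition tail_exp : R := 1 + (b1 + 1) / a2.

Lemma column0_closed_form n :
  X 0%nat (S n) = s / b2 * (rising_prod (b2 / a2) n / rising_prod (1 + (B + 1) / a2) n).
Proof.
  set (b := b2 / a2). set (c := (B + 1) / a2).
  assert (Hb : 0 < b) by (apply Rdiv_lt_0_compat; lra).
  assert (Hc : 0 < c) by (apply Rdiv_lt_0_compat; lra).
  assert (Eb : b2 = a2 * b) by (unfold b; field; lra).
  assert (Ec : B = a2 * c - 1) by (unfold c; field; lra).
  induction n as [|n IH].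
  - rewrite X_0_1. cbn [rising_prod]. rewrite Eb, Ec. field. repeat split; lra.
  - rewrite X_0_S, IH. cbn [rising_prod].
    pose proof (rising_prod_pos b n Hb). pose proof (rising_prod_pos (1 + c) n ltac:(lra)).
    pose proof (pos_INR (S n)). rewrite (S_INR (S n)), Eb, Ec.
    field. repeat split; try lra.
    replace (a2 * (INR (S n) + 1) + (a2 * c - 1) + 1) with (a2 * (INR (S n) + 1 + c)) by ring.
    apply Rgt_not_eq, Rmult_lt_0_compat; lra.
Qed.

(** Base case: [X 0 w * w^e -> C(0)], via Gauss's formula for [Gamma]. *)
Lemma column0_limit :
  is_lim_seq (fun w => X 0%nat w * exp (tail_exp * ln (INR w))) (tail_const 0).
Proof.
  set (b := b2 / a2). set (c := (B + 1) / a2).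
  assert (Hb : 0 < b) by (apply Rdiv_lt_0_compat; lra).
  assert (Hc : 0 < c) by (apply Rdiv_lt_0_compat; lra).
  assert (He : tail_exp = 1 + c - b) by (unfold tail_exp, c, b; rewrite HB; field; lra).
  assert (Hgauss : forall n, X 0%nat (S n) * exp (tail_exp * ln (INR (S n)))
             = s / b2 * (gauss_seq (1 + c) n / gauss_seq b n) * exp (tail_exp * log_incr n)).
  { intros n. rewrite column0_closed_form. fold b c. unfold gauss_seq, Rpower, log_incr.
    replace (tail_exp * ln (INR (S n)))
      with (tail_exp * (ln (INR (S n)) - ln (INR n)) + tail_exp * ln (INR n)) by ring.
    replace ((1 + c) * ln (INR n)) with (b * ln (INR n) + tail_exp * ln (INR n))
      by (rewrite He; ring).
    rewrite !exp_plus.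
    pose proof (rising_prod_pos b n Hb). pose proof (rising_prod_pos (1 + c) n ltac:(lra)).
    pose proof (fact_pos n). pose proof (exp_pos (b * ln (INR n))).
    pose proof (exp_pos (tail_exp * ln (INR n))).
    field. repeat split; lra. }
  assert (HC : tail_const 0 = s / b2 * (Gamma (1 + c) / Gamma b) * 1).
  { unfold tail_const. simpl INR. rewrite Rplus_0_l. fold b c.
    pose proof (Gamma_pos (b1 / a1) ltac:(apply Rdiv_lt_0_compat; lra)).
    pose proof (Gamma_pos b Hb).
    rewrite (Rplus_comm 1 b), Gamma_succ by lra. simpl fact.
    replace b2 with (a2 * b) by (unfold b; field; lra).
    field. repeat split; lra. }
  pose proof (proj1 (Gamma_spec b Hb)) as Gb.
  pose proof (proj1 (Gamma_spec (1 + c) ltac:(lra))) as Gc.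
  apply is_lim_seq_Reals in Gb, Gc.
  apply is_lim_seq_incr_1.
  apply is_lim_seq_ext with (1 := fun n => eq_sym (Hgauss n)).
  rewrite HC. apply is_lim_seq_mult'; [|apply exp_log_incr_lim].
  apply is_lim_seq_mult'; [apply is_lim_seq_const|].
  apply is_lim_seq_div'; [exact Gc | exact Gb | apply Rgt_not_eq, Gamma_pos, Hb].
Qed.

(** Induction step: along the column [w1 = i+1] the scaled values
    [z_m = X (i+1) m * m^e] satisfy an affine recurrence whose forcing term
    comes from column [i]; [affine_recurrence_limit] gives their limit. *)
Lemma column_step i (L : R) :
  is_lim_seq (fun w => X i w * exp (tail_exp * ln (INR w))) L ->
  is_lim_seq (fun w => X (S i) w * exp (tail_exp * ln (INR w)))
     (L * (a1 * INR i + b1) / (a1 * INR (S i))).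
Proof.
  intros IH.
  set (e := tail_exp) in *.
  assert (He : 0 < e)
    by (unfold e, tail_exp; pose proof (Rdiv_lt_0_compat (b1 + 1) a2 ltac:(lra) Ha2); lra).
  set (G := a1 * INR i + b1).
  assert (HG : 0 < G) by (unfold G; pose proof (pos_INR i); nra).
  set (k := (a1 * INR (S i) + B + 1 + a2) / a2).
  assert (Hk : 0 < k)
    by (unfold k; pose proof (pos_INR (S i)); apply Rdiv_lt_0_compat; nra).
  set (rho := fun m => (INR m + b2 / a2) / (INR m + k) * exp (e * log_incr m)).
  set (h := fun m => G * (X i (S m) * exp (e * ln (INR (S m)))) / a2 / (INR m + k)).
  assert (HaS : 0 < a1 * INR (S i)) by (apply Rmult_lt_0_compat; [lra | apply INR_S_pos]).
  replace (L * G / (a1 * INR (S i))) with ((G * L / a2) / (a1 * INR (S i) / a2))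
    by (pose proof (INR_S_pos i); field; repeat split; lra).
  apply affine_recurrence_limit with (rho := rho) (h := h).
  - apply Rdiv_lt_0_compat; lra.
  - intros m. rewrite X_S_S. unfold rho, h, log_incr. pose proof (pos_INR m).
    replace (e * ln (INR (S m)))
      with (e * (ln (INR (S m)) - ln (INR m)) + e * ln (INR m)) by ring.
    rewrite exp_plus.
    replace (a1 * INR (S i) + a2 * INR (S m) + B + 1) with (a2 * (INR m + k))
      by (unfold k; rewrite (S_INR m); field; lra).
    fold G. field. lra.
  - replace (a1 * INR (S i) / a2) with (k - b2 / a2 - e)
      by (unfold k, e, tail_exp; rewrite HB; field; lra).
    apply contraction_rate; assumption.
  - apply is_lim_seq_ext with
      (u := fun m => G * (X i (S m) * exp (e * ln (INR (S m)))) / a2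
                     * ((INR m + 0) / (INR m + k))).
    { intros m. unfold h. pose proof (pos_INR m). field. lra. }
    replace (Finite (G * L / a2)) with (Finite (G * L / a2 * 1)) by (f_equal; ring).
    apply is_lim_seq_mult'; [|apply lim_shifted_ratio, Hk].
    unfold Rdiv. apply is_lim_seq_mult'; [|apply is_lim_seq_const].
    apply is_lim_seq_mult'; [apply is_lim_seq_const|].
    apply (is_lim_seq_incr_1 (fun w => X i w * exp (e * ln (INR w)))), IH.
Qed.

Lemma column_limit w1 :
  is_lim_seq (fun w => X w1 w * exp (tail_exp * ln (INR w))) (tail_const w1).
Proof.
  induction w1 as [|i IH].
  - exact column0_limit.
  - rewrite tail_const_S. exact (column_step i _ IH).
Qed.

End ColumnAsymptotics.

Lemma model_coeffs_pos N p q r :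
  (3 <= N)%nat -> 0 < p < 1 -> 0 < q < 1 -> 0 < r < 1 ->
  0 < alpha1 p q r /\ 0 < alpha2 N p q r /\ 0 < beta1 p q /\ 0 < beta2 N p q r.
Proof.
  intros HN Hp Hq Hr.
  assert (HN3 : 3 <= INR N) by (replace 3 with (INR 3) by (simpl; ring); apply le_INR, HN).
  assert (Hb1 : 0 < beta1 p q) by (unfold beta1; apply Rdiv_lt_0_compat; nra).
  repeat split.
  - unfold alpha1. nra.
  - unfold alpha2.
    assert (0 < p * r * (INR N - 2) / (INR N - 1))
      by (apply Rdiv_lt_0_compat; [apply Rmult_lt_0_compat; nra | lra]).
    nra.
  - exact Hb1.
  - unfold beta2. fold (beta1 p q). apply Rmult_lt_0_compat; lra.
Qed.

Theorem theorem3p4 (N : nat) (p q r : R) :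
  (3 <= N)%nat -> 0 < p < 1 -> 0 < q < 1 -> 0 < r < 1 ->
  (forall w1 : nat,
     Un_cv (fun w2 : nat =>
              xw N p q r w1 w2 /
              (Cconst N p q r w1 *
               Rpower (INR w2) (- (1 + (beta1 p q + 1) / alpha2 N p q r)))) 1)
  /\
  (forall w2 : nat,
     Un_cv (fun w1 : nat =>
              xw N p q r w1 w2 /
              (Cconst' N p q r w2 *
               Rpower (INR w1) (- (1 + (beta2 N p q r + 1) / alpha1 p q r)))) 1).
Proof.
  intros HN Hp Hq Hr.
  destruct (model_coeffs_pos N p q r HN Hp Hq Hr) as (Ha1 & Ha2 & Hb1 & Hb2).
  assert (HB : beta N p q r = beta1 p q + beta2 N p q r) by reflexivity.
  assert (HB' : beta N p q r = beta2 N p q r + beta1 p q) by (rewrite HB; ring).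
  split.
  -
    intros w1. apply equiv_of_scaled_limit.
    + apply Rgt_not_eq, (tail_const_pos _ _ _ _ _ _ Ha1 Ha2 Hb1 Hb2 HB); lra.
    + exact (column_limit (alpha1 p q r) (alpha2 N p q r) (beta1 p q) (beta2 N p q r)
               (beta N p q r) r (xw N p q r) Ha1 Ha2 Hb1 Hb2 HB
               eq_refl (fun m => eq_refl) (fun i m => eq_refl) w1).
  -
    intros w2. apply equiv_of_scaled_limit.
    + apply Rgt_not_eq, (tail_const_pos _ _ _ _ _ _ Ha2 Ha1 Hb2 Hb1 HB'); lra.
    + apply (column_limit (alpha2 N p q r) (alpha1 p q r) (beta2 N p q r) (beta1 p q)
               (beta N p q r) (1 - r) (fun i j => xw N p q r j i) Ha2 Ha1 Hb2 Hb1
               HB' eq_refl (fun m => eq_refl)).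
      intros i m. cbn [xw]. unfold Rdiv. f_equal; [ring | f_equal; ring].
Qed.
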